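(* Let $n\ge4$, let $A_1,\dots,A_n$ be (not necessarily distinct) points in $\mathbb{R}^m$, set $A_{n+1}=A_1$, and for $i\ne j$ let $M_{ij}$ be the midpoint of the segment $A_iA_j$. For $1\le i<j\le n$ let $$c_{ij}=\sum_{r=0}^{2}(-1)^{r+1}\binom{n-j+i-1}{2-r}\binom{j-i-1}{r}.$$ Then $$\binom{n-2}{2}\sum_{i=1}^n|A_iA_{i+1}|^2=\sum_{\substack{1\le i<j\le n\\ 1<j-i<n-1}}c_{ij}|A_iA_j|^2+\sum_{1\le i<j<k<l\le n}4|M_{ik}M_{jl}|^2.$$ For $n=4$ this reduces to $|A_1A_2|^2+|A_2A_3|^2+|A_3A_4|^2+|A_4A_1|^2=|A_1A_3|^2+|A_2A_4|^2+4|M_{13}M_{24}|^2$.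
   Context: $|XY|$ denotes the Euclidean distance in $\mathbb{R}^m$. Binomial coefficients $\binom{a}{b}$ are $0$ when $b>a$ or $b<0$. *)

From mathcomp Require Import all_boot all_order all_algebra.
Set Implicit Arguments. Unset Strict Implicit. Unset Printing Implicit Defensive.
Import Order.TTheory GRing.Theory Num.Theory.
Local Open Scope ring_scope.

Definition edist (R : rcfType) (m : nat) (X Y : 'rV[R]_m) : R :=
  Num.sqrt (\sum_(k < m) (X ord0 k - Y ord0 k) ^+ 2).

Definition midpoint (R : rcfType) (m : nat) (X Y : 'rV[R]_m) : 'rV[R]_m :=
  (2%:R)^-1 *: (X + Y).

Definition coef_c (R : rcfType) (n i j : nat) : R :=
  \sum_(r < 3) (-1) ^+ r.+1 * ('C(n - j + i - 1, 2 - r))%:R * ('C(j - i - 1, r))%:R.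

Definition cyc_succ (n i : nat) : nat := if i == n then 1%N else i.+1.

(* Everything is linear in the squared distances D_ij = |A_iA_j|^2.  The
   parallelogram law gives 4|M_ik M_jl|^2 = D_ij + D_jk + D_kl + D_il - D_ik - D_jl,
   so the sum over quadruples is a sum over pairs i < j with weight the number of
   pairs of other indices lying on the same side of the chord ij minus the number
   of pairs separated by it: with a = j - i - 1 indices inside and s = n - j + i - 1
   outside, this is C(a,2) + C(s,2) - a s = -c_ij.  When ij is a side of the
   polygon (a = 0 or s = 0) this weight is C(n-2,2). *)

From mathcomp Require Import all_boot all_order all_algebra.
From mathcomp Require Import ring zify.
Import Order.TTheory GRing.Theory Num.Theory.

Set Implicit Arguments.
Unset Strict Implicit.
Unset Printing Implicit Defensive.

Lemma bin2D a b : 'C(a + b, 2) = 'C(a, 2) + 'C(b, 2) + a * b.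
Proof.
elim: b => [|b IHb]; first by rewrite muln0 !addn0.
by rewrite addnS !binS IHb !bin1; lia.
Qed.

Lemma big_nat_subinterval (R : Type) (idx : R) (op : Monoid.law idx) m n lo hi
    (F : nat -> R) : m <= lo -> hi <= n ->
  \big[op/idx]_(m <= u < n | lo <= u < hi) F u = \big[op/idx]_(lo <= u < hi) F u.
Proof.
move=> mlo hin.
by rewrite [RHS](@big_nat_widenl _ _ _ lo m) // (@big_nat_widen _ _ _ m hi n).
Qed.

Lemma count_interval m n lo hi : m <= lo -> hi <= n ->
  \sum_(m <= u < n) (lo <= u < hi) = hi - lo.
Proof.
move=> mlo hin; rewrite -big_mkcond big_nat_subinterval //.
by rewrite sum_nat_const_nat muln1.
Qed.

Lemma count_pairs_interval m n lo hi : m <= lo -> hi <= n ->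
  \sum_(m <= u < n) \sum_(m <= v < n) [&& lo <= u, u < v & v < hi] = 'C(hi - lo, 2).
Proof.
move=> mlo hin.
transitivity (\sum_(lo <= u < hi) (hi - u.+1)).
  rewrite -(big_nat_subinterval _ _ mlo hin) [RHS]big_mkcond /=.
  apply: eq_big_nat => u /andP[mu _]; case: ifP => hu.
  - rewrite -(@count_interval m n u.+1 hi) ?leqW //.
    by apply: eq_big_nat => v _; lia.
  - by rewrite big1 // => v _; lia.
rewrite -bin2_sum -{1}[lo]add0n big_addn big_nat_rev.
by apply: eq_big_nat => u hu; lia.
Qed.

Lemma count_pairs_interval_mull m n lo hi c : m <= lo -> hi <= n ->
  \sum_(m <= u < n) \sum_(m <= v < n) c * [&& lo <= u, u < v & v < hi]
  = c * 'C(hi - lo, 2).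
Proof.
move=> mlo hin; rewrite -(count_pairs_interval mlo hin) big_distrr /=.
by apply: eq_bigr => u _; rewrite big_distrr.
Qed.

Lemma count_interval_product_mull m n lo1 hi1 lo2 hi2 c :
    m <= lo1 -> hi1 <= n -> m <= lo2 -> hi2 <= n ->
  \sum_(m <= u < n) \sum_(m <= v < n) c * ((lo1 <= u < hi1) * (lo2 <= v < hi2))
  = c * ((hi1 - lo1) * (hi2 - lo2)).
Proof.
move=> mlo1 hin1 mlo2 hin2.
rewrite -(count_interval mlo1 hin1) -(count_interval mlo2 hin2) big_distrlr big_distrr /=.
by apply: eq_bigr => u _; rewrite big_distrr.
Qed.

Local Open Scope ring_scope.

Section PairAndQuadrupleSums.
Variable V : nmodType.
Implicit Types (m n : nat) (F : nat -> nat -> nat -> nat -> V) (G : nat -> nat -> V).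

Definition sum_pairs m n G := \sum_(m <= i < n) \sum_(i.+1 <= j < n) G i j.

Definition sum_quads m n F :=
  \sum_(m <= i < n) \sum_(i.+1 <= j < n) \sum_(j.+1 <= k < n) \sum_(k.+1 <= l < n)
    F i j k l.

Lemma sumr_nat_gt m i n (H : nat -> V) : (m <= i)%N ->
  \sum_(i.+1 <= j < n) H j = \sum_(m <= j < n) H j *+ (i < j)%N.
Proof.
move=> mi; rewrite (@big_nat_widenl _ _ _ i.+1 m) ?leqW // big_mkcond /=.
by apply: eq_bigr => j _; rewrite mulrb.
Qed.

Lemma sum_pairsE m n G :
  sum_pairs m n G = \sum_(m <= i < n) \sum_(m <= j < n) G i j *+ (i < j)%N.
Proof. by apply: eq_big_nat => i /andP[mi _]; rewrite (sumr_nat_gt _ _ mi). Qed.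

(* Over the full box the four summations have independent ranges and can be
   exchanged freely. *)
Lemma sum_quadsE m n F :
  sum_quads m n F = \sum_(m <= i < n) \sum_(m <= j < n) \sum_(m <= k < n)
    \sum_(m <= l < n) F i j k l *+ [&& i < j, j < k & k < l]%N.
Proof.
apply: eq_big_nat => i /andP[mi _]; rewrite (sumr_nat_gt _ _ mi).
apply: eq_big_nat => j /andP[mj _]; rewrite (sumr_nat_gt _ _ mj) -sumrMnl.
apply: eq_big_nat => k /andP[mk _]; rewrite (sumr_nat_gt _ _ mk) -!sumrMnl.
by apply: eq_bigr => l _; rewrite -!mulrnA !mulnb; congr (_ *+ _); lia.
Qed.

Lemma sumr_mulrn2 m n (x : V) (f : nat -> nat -> nat) :
  \sum_(m <= u < n) \sum_(m <= v < n) x *+ f u v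
  = x *+ \sum_(m <= u < n) \sum_(m <= v < n) f u v.
Proof. by rewrite -sumrMnr; apply: eq_bigr => u _; rewrite sumrMnr. Qed.

Lemma eq_sum_pairs m n G1 G2 :
    (forall x y, (m <= x)%N -> (x < y < n)%N -> G1 x y = G2 x y) ->
  sum_pairs m n G1 = sum_pairs m n G2.
Proof.
move=> eqG; apply: eq_big_nat => x /andP[mx _].
by apply: eq_big_nat => y /andP[xy yn]; rewrite eqG ?xy.
Qed.

Lemma eq_sum_quads m n F1 F2 :
    (forall i j k l, F1 i j k l = F2 i j k l) -> sum_quads m n F1 = sum_quads m n F2.
Proof.
move=> eqF; apply: eq_bigr => i _; apply: eq_bigr => j _.
by apply: eq_bigr => k _; apply: eq_bigr => l _; apply: eqF.
Qed.

Lemma sum_pairsD m n G1 G2 :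
  sum_pairs m n (fun x y => G1 x y + G2 x y) = sum_pairs m n G1 + sum_pairs m n G2.
Proof. by rewrite -big_split; apply: eq_bigr => x _; rewrite -big_split. Qed.

Lemma sum_quadsD m n F1 F2 :
  sum_quads m n (fun i j k l => F1 i j k l + F2 i j k l)
  = sum_quads m n F1 + sum_quads m n F2.
Proof.
rewrite -big_split; apply: eq_bigr => i _; rewrite -big_split; apply: eq_bigr => j _.
by rewrite -big_split; apply: eq_bigr => k _; rewrite -big_split.
Qed.

Variables (m n : nat) (G : nat -> nat -> V).

Lemma sum_quads_ij :
  sum_quads m n (fun i j _ _ => G i j) = sum_pairs m n (fun x y => G x y *+ 'C(n - y.+1, 2)).
Proof.
rewrite sum_quadsE sum_pairsE; apply: eq_big_nat => x /andP[mx _].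
apply: eq_big_nat => y /andP[my _]; rewrite sumr_mulrn2 -mulrnA; congr (_ *+ _).
rewrite mulnC -(count_pairs_interval_mull _ (leqW my) (leqnn n)).
by apply: eq_big_nat => k _; apply: eq_big_nat => l /andP[_ ->]; rewrite andbT mulnb.
Qed.

Lemma sum_quads_il :
  sum_quads m n (fun i _ _ l => G i l) = sum_pairs m n (fun x y => G x y *+ 'C(y - x.+1, 2)).
Proof.
rewrite sum_quadsE sum_pairsE; apply: eq_big_nat => x /andP[mx _].
under eq_bigr do rewrite exchange_big_nat.
rewrite exchange_big_nat; apply: eq_big_nat => y /andP[my yn].
rewrite sumr_mulrn2 -mulrnA; congr (_ *+ _).
rewrite mulnC -(count_pairs_interval_mull _ (leqW mx) (ltnW yn)).
by apply: eq_big_nat => j /andP[mj _]; apply: eq_big_nat => k _; lia.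
Qed.

Lemma sum_quads_jk : sum_quads m n (fun _ j k _ => G j k)
  = sum_pairs m n (fun x y => G x y *+ ((x - m) * (n - y.+1))).
Proof.
rewrite sum_quadsE sum_pairsE exchange_big_nat; apply: eq_big_nat => x /andP[mx xn].
rewrite exchange_big_nat; apply: eq_big_nat => y /andP[my _].
rewrite sumr_mulrn2 -mulrnA; congr (_ *+ _).
rewrite mulnC -(count_interval_product_mull _ (leqnn m) (ltnW xn) (leqW my) (leqnn n)).
by apply: eq_big_nat => i /andP[mi _]; apply: eq_big_nat => l /andP[_ ln]; lia.
Qed.

Lemma sum_quads_kl :
  sum_quads m n (fun _ _ k l => G k l) = sum_pairs m n (fun x y => G x y *+ 'C(x - m, 2)).
Proof.
rewrite sum_quadsE sum_pairsE.
under eq_bigr do rewrite exchange_big_nat.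
rewrite exchange_big_nat; apply: eq_big_nat => x /andP[mx xn].
under eq_bigr do rewrite exchange_big_nat.
rewrite exchange_big_nat; apply: eq_big_nat => y /andP[my _].
rewrite sumr_mulrn2 -mulrnA; congr (_ *+ _).
rewrite mulnC -(count_pairs_interval_mull _ (leqnn m) (ltnW xn)).
by apply: eq_big_nat => i /andP[mi _]; apply: eq_big_nat => j _; lia.
Qed.

Lemma sum_quads_ik : sum_quads m n (fun i _ k _ => G i k)
  = sum_pairs m n (fun x y => G x y *+ ((y - x.+1) * (n - y.+1))).
Proof.
rewrite sum_quadsE sum_pairsE; apply: eq_big_nat => x /andP[mx _].
rewrite exchange_big_nat; apply: eq_big_nat => y /andP[my yn].
rewrite sumr_mulrn2 -mulrnA; congr (_ *+ _).
rewrite mulnC -(count_interval_product_mull _ (leqW mx) (ltnW yn) (leqW my) (leqnn n)).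
by apply: eq_big_nat => j _; apply: eq_big_nat => l /andP[_ ln]; lia.
Qed.

Lemma sum_quads_jl : sum_quads m n (fun _ j _ l => G j l)
  = sum_pairs m n (fun x y => G x y *+ ((x - m) * (y - x.+1))).
Proof.
rewrite sum_quadsE sum_pairsE exchange_big_nat; apply: eq_big_nat => x /andP[mx xn].
under eq_bigr do rewrite exchange_big_nat.
rewrite exchange_big_nat; apply: eq_big_nat => y /andP[my yn].
rewrite sumr_mulrn2 -mulrnA; congr (_ *+ _).
rewrite mulnC -(count_interval_product_mull _ (leqnn m) (ltnW xn) (leqW mx) (ltnW yn)).
by apply: eq_big_nat => i /andP[mi _]; apply: eq_big_nat => k _; lia.
Qed.

End PairAndQuadrupleSums.

Section Quadrilaterals.
Variable V : zmodType.
Implicit Types (F : nat -> nat -> nat -> nat -> V) (G : nat -> nat -> V).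

Lemma sum_pairsB m n G1 G2 :
  sum_pairs m n (fun x y => G1 x y - G2 x y) = sum_pairs m n G1 - sum_pairs m n G2.
Proof. by rewrite -sumrB; apply: eq_bigr => x _; rewrite -sumrB. Qed.

Lemma sum_quadsB m n F1 F2 :
  sum_quads m n (fun i j k l => F1 i j k l - F2 i j k l)
  = sum_quads m n F1 - sum_quads m n F2.
Proof.
rewrite -sumrB; apply: eq_bigr => i _; rewrite -sumrB; apply: eq_bigr => j _.
by rewrite -sumrB; apply: eq_bigr => k _; rewrite -sumrB.
Qed.

Lemma sum_quads_quadrilateral m n G :
  sum_quads m n (fun i j k l => G i j + G j k + G k l + G i l - G i k - G j l)
  = sum_pairs m n (fun x y =>
      G x y *+ ('C(y - x.+1, 2) + 'C(n - y.+1 + (x - m), 2))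
      - G x y *+ ((y - x.+1) * (n - y.+1 + (x - m)))).
Proof.
rewrite !sum_quadsB !sum_quadsD sum_quads_ij sum_quads_jk sum_quads_kl.
rewrite sum_quads_il sum_quads_ik sum_quads_jl -!sum_pairsD -!sum_pairsB.
apply: eq_sum_pairs => x y _ _; rewrite -[LHS]addrA -opprD -!mulrnDr.
by congr (_ - _); congr (_ *+ _); rewrite ?bin2D; lia.
Qed.

End Quadrilaterals.

Section PolygonSides.
Variables (V : nmodType) (n : nat) (D : nat -> nat -> V).
Hypothesis n_ge3 : (3 <= n)%N.

Lemma sum_polygon_sides_from i : (0 < i < n)%N ->
  \sum_(i.+1 <= j < n.+1 | ~~ (1 < j - i < n - 1)%N) D i j = D i i.+1 + D i n *+ (i == 1%N).
Proof.
move=> /andP[i0 ilt]; rewrite big_mkcond big_nat_recl //= subSnn /=; congr (_ + _).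
transitivity (\sum_(i.+1 <= j < n | (i == 1%N) && (j == n.-1)) D i j.+1).
  rewrite [RHS]big_mkcond; apply: eq_big_nat => j /andP[ij jn].
  by congr (if _ then _ else _); apply/idP/idP; lia.
have [->|i1] := eqVneq i 1%N; last by rewrite big_pred0.
by rewrite big_nat1_eq prednK ?(ltn_trans i0 ilt) //; case: ifP => //; lia.
Qed.

Lemma sum_polygon_sides :
  \sum_(1 <= i < n.+1) \sum_(i.+1 <= j < n.+1 | ~~ (1 < j - i < n - 1)%N) D i j
  = \sum_(1 <= i < n) D i i.+1 + D 1%N n.
Proof.
rewrite big_nat_recr ?(leq_trans _ n_ge3) // [X in _ + X = _]big_geq // addr0.
rewrite (eq_big_nat _ _ sum_polygon_sides_from) big_split /=; congr (_ + _).
under eq_bigr do rewrite mulrb.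
by rewrite -big_mkcond big_nat1_eq (ltnW n_ge3).
Qed.

End PolygonSides.

Section Geometry.
Variables (R : rcfType) (m : nat).
Implicit Types X Y Z W : 'rV[R]_m.

Lemma edist_sqr X Y : edist X Y ^+ 2 = \sum_(k < m) (X ord0 k - Y ord0 k) ^+ 2.
Proof. by rewrite sqr_sqrtr // sumr_ge0 // => k _; rewrite sqr_ge0. Qed.

Lemma edistC X Y : edist X Y = edist Y X.
Proof. by rewrite /edist; congr Num.sqrt; apply: eq_bigr => k _; rewrite -sqrrN opprB. Qed.

Lemma four_sqr_edist_midpoint X Y Z W :
  4%:R * edist (midpoint X Z) (midpoint Y W) ^+ 2
  = edist X Y ^+ 2 + edist Y Z ^+ 2 + edist Z W ^+ 2 + edist X W ^+ 2
    - edist X Z ^+ 2 - edist Y W ^+ 2.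
Proof.
rewrite !edist_sqr mulr_sumr -!big_split -!sumrB; apply: eq_bigr => k _ /=.
have two_neq0 : 2%:R != 0 :> R by rewrite pnatr_eq0.
by rewrite !mxE; field.
Qed.

End Geometry.

Lemma coef_cE (R : rcfType) n i j :
  coef_c R n i j
  = ((n - j + i - 1) * (j - i - 1))%:R - ('C(n - j + i - 1, 2) + 'C(j - i - 1, 2))%:R.
Proof.
rewrite /coef_c !big_ord_recr big_ord0 /= !bin0 !bin1 subn0.
by rewrite natrD natrM; ring.
Qed.

Lemma coef_c_side (R : rcfType) n i j : (0 < i < j)%N -> (j <= n)%N ->
  ~~ (1 < j - i < n - 1)%N -> coef_c R n i j = - ('C(n - 2, 2))%:R.
Proof.
move=> /andP[i0 ij] jn side; rewrite coef_cE.
have [ji|ji] := eqVneq (j - i - 1)%N 0%N.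
  by rewrite ji muln0 bin0n addn0 sub0r (_ : n - j + i - 1 = n - 2)%N //; lia.
rewrite (_ : n - j + i - 1 = 0)%N; last by lia.
by rewrite mul0n bin0n add0n sub0r (_ : j - i - 1 = n - 2)%N //; lia.
Qed.

Lemma sum_quads_midpoint (R : rcfType) m n (A : nat -> 'rV[R]_m) :
  sum_quads 1 n.+1 (fun i j k l =>
    4%:R * edist (midpoint (A i) (A k)) (midpoint (A j) (A l)) ^+ 2)
  = - sum_pairs 1 n.+1 (fun x y => coef_c R n x y * edist (A x) (A y) ^+ 2).
Proof.
pose D x y := edist (A x) (A y) ^+ 2.
rewrite (@eq_sum_quads _ _ _ _
  (fun i j k l => D i j + D j k + D k l + D i l - D i k - D j l)); last first.
  by move=> i j k l; apply: four_sqr_edist_midpoint.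
rewrite sum_quads_quadrilateral -sumrN; apply: eq_big_nat => x /andP[x0 _].
rewrite -sumrN; apply: eq_big_nat => y /andP[xy yn].
rewrite coef_cE mulrBl opprB !mulr_natl; congr (_ - _); congr (_ *+ _).
  by rewrite addnC; congr ('C(_, 2) + 'C(_, 2)); lia.
by rewrite mulnC; congr (_ * _); lia.
Qed.

Theorem corollary3p4 (R : rcfType) (m n : nat) (A : nat -> 'rV[R]_m) :
  (4 <= n)%N ->
  ('C(n - 2, 2))%:R * \sum_(1 <= i < n.+1) edist (A i) (A (cyc_succ n i)) ^+ 2
  = \sum_(1 <= i < n.+1) \sum_(i.+1 <= j < n.+1 | (1 < j - i < n - 1)%N)
        coef_c R n i j * edist (A i) (A j) ^+ 2
    + \sum_(1 <= i < n.+1) \sum_(i.+1 <= j < n.+1) \sum_(j.+1 <= k < n.+1)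
        \sum_(k.+1 <= l < n.+1)
        4%:R * edist (midpoint (A i) (A k)) (midpoint (A j) (A l)) ^+ 2.
Proof.
move=> n_ge4; have n_ge3 := ltnW n_ge4.
have -> : \sum_(1 <= i < n.+1) edist (A i) (A (cyc_succ n i)) ^+ 2
  = \sum_(1 <= i < n.+1) \sum_(i.+1 <= j < n.+1 | ~~ (1 < j - i < n - 1)%N)
      edist (A i) (A j) ^+ 2.
  rewrite sum_polygon_sides // big_nat_recr ?(ltnW (ltnW n_ge3)) //=.
  rewrite /cyc_succ eqxx (edistC (A n)).
  by congr (_ + _); apply: eq_big_nat => i /andP[_ ilt]; rewrite ifN_eq // ltn_eqF.
rewrite -[X in _ = _ + X]/(sum_quads 1 n.+1 _) sum_quads_midpoint.
rewrite /sum_pairs -sumrB mulr_sumr; apply: eq_big_nat => i /andP[i0 _].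
rewrite [X in _ - X](bigID (fun j => 1 < j - i < n - 1)%N) /= opprD addrA subrr add0r.
rewrite mulr_sumr -sumrN big_nat_cond [RHS]big_nat_cond.
apply: eq_bigr => j /andP[/andP[ij jn] side].
by rewrite coef_c_side ?i0 // mulNr opprK.
Qed.
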